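(* Let $G$ be an infinite group and $S$ any finite generating set of $G$ (with $S=S^{-1}$, $e\notin S$). Then the average curvature over the ball of radius $n$ tends to zero: $$\lim_{n\to\infty}\frac{1}{|B_n|}\sum_{g\in B_n\smallsetminus\{e\}}\kappa(g)=0.$$
   Context: For a group $G$ with finite generating set $S$ ($S=S^{-1}$, $e\notin S$), $|x|$ denotes word length, $B_n=\{g\in G:|g|\le n\}$, $\mathrm{Av}(g)=\frac{1}{|S|}\sum_{a\in S}|a^{-1}ga|$, and for $g\neq e$ the curvature is $\kappa(g)=\frac{|g|-\mathrm{Av}(g)}{|g|}$. *)

From HB Require Import structures.
From mathcomp Require Import all_boot all_order all_algebra.
From mathcomp Require Import all_classical all_reals all_analysis.
Set Implicit Arguments. Unset Strict Implicit. Unset Printing Implicit Defensive.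
Import Order.TTheory GRing.Theory Num.Theory.

Section WordMetric.
Variable G : groupType.

Definition wprod (w : seq G) : G := \big[@monoid.mul G/@monoid.one G]_(a <- w) a.

Fixpoint words (S : seq G) (k : nat) : seq (seq G) :=
  if k is k'.+1 then [seq a :: w | a <- S, w <- words S k'] else [:: [::]].

Definition sym_gen_set (S : seq G) : Prop :=
  [/\ uniq S,
      (forall a, a \in S -> (@monoid.inv G a) \in S),
      (@monoid.one G) \notin S &
      (forall g : G, exists w : seq G, all (mem S) w /\ wprod w = g)].

Definition infinite_group : Prop := ~ (exists s : seq G, forall g : G, g \in s).

(* word length |g| : least n such that g is a product of n letters of S
   (0 if g is not in the generated subgroup, which never happens for
   a generating set) *)
Definition wlen (S : seq G) (g : G) : nat :=
  match pselect (exists n, g \in [seq wprod w | w <- words S n]) with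
  | left h => ex_minn h
  | right _ => 0%N
  end.

Definition ball (S : seq G) (n : nat) : seq G :=
  undup [seq wprod w | w <- flatten [seq words S k | k <- iota 0 n.+1]].

Variable R : realType.
Local Open Scope ring_scope.

Definition Av (S : seq G) (g : G) : R :=
  (size S)%:R^-1 * \sum_(a <- S) (wlen S (@monoid.mul G (@monoid.mul G (@monoid.inv G a) g) a))%:R.

Definition curv (S : seq G) (g : G) : R :=
  ((wlen S g)%:R - Av S g) / (wlen S g)%:R.

Definition avg_curv (S : seq G) (n : nat) : R :=
  (size (ball S n))%:R^-1 * \sum_(g <- ball S n | g != @monoid.one G) curv S g.

End WordMetric.

(** Conjugating by a generator changes the word length by at most 2, hence
    [|kappa g| <= 2 / |g|].  In an infinite group every sphere is nonempty, so
    [|B_n| > n].  Splitting the average at a radius [k], the elements of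
    length at most [k] contribute at most [2 |B_k| / |B_n|] and the others at
    most [2 / (k + 1)]; letting [n] and then [k] grow gives the limit [0]. *)
From Pilot Require Import Defs.
From HB Require Import structures.
From mathcomp Require Import all_boot all_order all_algebra.
From mathcomp Require Import all_classical all_reals all_analysis.
From mathcomp Require Import ring lra.
Import Order.TTheory GRing.Theory Num.Theory numFieldNormedType.Exports.
Set Implicit Arguments. Unset Strict Implicit. Unset Printing Implicit Defensive.

Section WordLength.
Variables (G : groupType) (S : seq G).
Local Open Scope group_scope.

Lemma wprod_nil : wprod (Nil G) = 1.
Proof. by rewrite /wprod big_nil. Qed.

Lemma wprod_cons (a : G) (w : seq G) : wprod (a :: w) = a * wprod w.
Proof. by rewrite /wprod big_cons. Qed.

Lemma wprod_cat (w1 w2 : seq G) : wprod (w1 ++ w2) = wprod w1 * wprod w2.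
Proof.
elim: w1 => [|a w IH] /=; first by rewrite wprod_nil monoid.mul1g.
by rewrite !wprod_cons IH monoid.mulgA.
Qed.

Lemma mem_words k w : (w \in words S k) = all (mem S) w && (size w == k).
Proof.
elim: k w => [|k IH] [|a w] //=.
- by rewrite inE andbF.
- by apply/negbTE/allpairsP => -[[x y] [_ _]].
rewrite eqSS; apply/allpairsP/andP => [[[x y] [/= Sx wy [-> ->]]]|[/andP[Sa Sw] sw]].
  by move: wy; rewrite IH Sx => /andP[-> ->].
by exists (a, w); rewrite IH Sw sw.
Qed.

Lemma wlen_le_word k w : w \in words S k -> (wlen S (wprod w) <= k)%N.
Proof.
move=> wk; rewrite /wlen; case: pselect => [h|[]]; last by exists k; exact: map_f.
by case: ex_minnP => m _; apply; exact: map_f.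
Qed.

Lemma wlen_le_size w : all (mem S) w -> (wlen S (wprod w) <= size w)%N.
Proof. by move=> Sw; apply: wlen_le_word; rewrite mem_words Sw eqxx. Qed.

Lemma wlen_one : wlen S 1 = 0%N.
Proof. by apply/eqP; rewrite -leqn0 -wprod_nil wlen_le_size. Qed.

Lemma wlen_letter a : a \in S -> (wlen S a <= 1)%N.
Proof.
by move=> Sa; rewrite -(monoid.mulg1 a) -wprod_nil -wprod_cons wlen_le_size //= Sa.
Qed.

Hypothesis gen : forall g : G, exists w : seq G, all (mem S) w /\ wprod w = g.

Lemma wlen_word g : exists2 w, w \in words S (wlen S g) & wprod w = g.
Proof.
rewrite /wlen; case: pselect => [h|[]].
  by case: ex_minnP => m /mapP[w wm ->] _; exists w.
have [w [Sw <-]] := gen g.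
by exists (size w); apply: map_f; rewrite mem_words Sw eqxx.
Qed.

Lemma wlen_mul_le x y : (wlen S (x * y) <= wlen S x + wlen S y)%N.
Proof.
have [w1 w1x e1] := wlen_word x; have [w2 w2y e2] := wlen_word y.
rewrite -{1}e1 -{1}e2 -wprod_cat; apply: wlen_le_word; move: w1x w2y.
by rewrite !mem_words all_cat size_cat => /andP[-> /eqP->] /andP[-> /eqP->]; rewrite eqxx.
Qed.

Hypothesis Sinv : forall a, a \in S -> a^-1 \in S.

Lemma wlen_conj_le a g : a \in S -> (wlen S (a^-1 * g * a) <= wlen S g + 2)%N.
Proof.
move=> Sa; apply: leq_trans (wlen_mul_le _ _) _.
rewrite -[2%N]/(1 + 1)%N addnA leq_add ?wlen_letter //.
by apply: leq_trans (wlen_mul_le _ _) _; rewrite addnC leq_add2l wlen_letter ?Sinv.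
Qed.

Lemma wlen_le_conj a g : a \in S -> (wlen S g <= wlen S (a^-1 * g * a) + 2)%N.
Proof.
move=> Sa; have := wlen_conj_le (a^-1 * g * a) (Sinv Sa).
by rewrite monoid.invgK monoid.mulgA monoid.mulgK monoid.mulVKg.
Qed.

Lemma mem_ball n g : (g \in Defs.ball S n) = (wlen S g <= n)%N.
Proof.
rewrite mem_undup; apply/mapP/idP => [[w /flatten_mapP[k] + wk ->]|gn].
  by rewrite mem_iota ltnS => kn; exact: leq_trans (wlen_le_word wk) kn.
have [w wg <-] := wlen_word g.
by exists w => //; apply/flatten_mapP; exists (wlen S g); rewrite ?mem_iota ?ltnS.
Qed.

Lemma wlen_pred g m : wlen S g = m.+1 -> exists h, wlen S h = m.
Proof.
move=> gm; have [[|a w] + wg] := wlen_word g; rewrite gm mem_words //=.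
move=> /andP[/andP[Sa Sw] /eqP[sw]]; exists (wprod w); apply/eqP.
rewrite eqn_leq -{1}sw wlen_le_size //= -ltnS -gm -wg wprod_cons.
by apply: leq_trans (wlen_mul_le _ _) _; rewrite addnC -addn1 leq_add2l wlen_letter.
Qed.

Hypothesis infG : infinite_group G.

Lemma wlen_unbounded n : exists g, (n < wlen S g)%N.
Proof.
apply: contrapT => nbig; apply: infG; exists (Defs.ball S n) => g.
by rewrite mem_ball leqNgt; apply/negP => ng; apply: nbig; exists g.
Qed.

Lemma sphere_nonempty n : exists g, wlen S g = n.
Proof.
have [g ng] := wlen_unbounded n.
suff /(_ (wlen S g - n)%N) : forall d, (exists h, wlen S h = d + n) -> exists h, wlen S h = n.
  by apply; exists g; rewrite subnK // ltnW.
by elim=> [//|d IH] [h]; rewrite addSn => /wlen_pred /IH.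
Qed.

Lemma size_ball_gt n : (n < size (Defs.ball S n))%N.
Proof.
elim: n => [|n IH]; first by have := mem_ball 0 1; rewrite wlen_one; case: (Defs.ball S 0).
have [g gn] := sphere_nonempty n.+1.
apply: leq_trans (_ : size (g :: Defs.ball S n) <= _)%N; first by rewrite ltnS.
apply: uniq_leq_size => [|x]; first by rewrite /= undup_uniq mem_ball gn ltnn.
by rewrite inE !mem_ball => /predU1P[->|/leqW//]; rewrite gn.
Qed.

Lemma size_gen_gt0 : (0 < size S)%N.
Proof.
rewrite lt0n size_eq0; apply/eqP => S0; apply: infG; exists [:: 1] => g.
have [[|a w] [+ <-]] := gen g; first by rewrite wprod_nil inE.
by rewrite /= S0.
Qed.

End WordLength.

Local Open Scope classical_set_scope.
Local Open Scope ring_scope.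

Lemma mean_dist_le (R : numFieldType) (T : eqType) (s : seq T) (f : T -> R) (x c : R) :
  (0 < size s)%N -> {in s, forall a, `|f a - x| <= c} ->
  `|(size s)%:R^-1 * \sum_(a <- s) f a - x| <= c.
Proof.
move=> s0 fxc; have s0R : (size s)%:R != 0 :> R by rewrite pnatr_eq0 -lt0n.
have sum_const (y : R) : \sum_(a <- s) y = y *+ size s.
  by rewrite big_const_seq count_predT iter_addr_0.
have -> : (size s)%:R^-1 * \sum_(a <- s) f a - x
          = (size s)%:R^-1 * \sum_(a <- s) (f a - x).
  by rewrite sumrB sum_const mulrBr -[x *+ _]mulr_natl mulrA mulVf ?mul1r.
rewrite normrM normfV normr_nat ler_pdivrMl ?ltr0n //.
apply: le_trans (ler_norm_sum _ _ _) _.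
by rewrite mulr_natl -sum_const big_seq [X in _ <= X]big_seq ler_sum.
Qed.

Lemma invr_nat_le_split (R : numFieldType) (l k : nat) :
  (l%:R)^-1 <= (l <= k)%N%:R + (k.+1)%:R^-1 :> R.
Proof.
have [lk|kl] /= := leqP l k.
  case: l lk => [|l] _; first by rewrite invr0 addr_ge0.
  apply: (@le_trans _ _ 1); first by rewrite invf_le1 ?ler1n ?ltr0n.
  by rewrite lerDl invr_ge0.
by rewrite add0r lef_pV2 ?posrE ?ltr0n ?ler_nat // (leq_trans _ kl).
Qed.

Lemma exists_div_nat_lt (R : archiFieldType) (c e : R) :
  0 < e -> exists N, forall m : nat, (N < m)%N -> c / m%:R < e.
Proof.
move=> e0; exists (Num.truncn (c / e)) => m Nm.
rewrite ltr_pdivrMr ?ltr0n ?(leq_ltn_trans _ Nm) // mulrC -ltr_pdivrMr //.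
by apply: lt_le_trans (truncnS_gt _) _; rewrite ler_nat.
Qed.

Lemma cvg0_split_bound (R : realType) (u : nat -> R) (b : nat -> nat)
    (C : nat -> R) (D : R) :
  (forall n, (n < b n)%N) ->
  (forall k n, `|u n| <= C k / (b n)%:R + D / (k.+1)%:R) ->
  u @ \oo --> 0.
Proof.
move=> b_gt u_le; apply/cvgrPdist_lt => e e0; have e20 : 0 < e / 2 by rewrite divr_gt0.
have [k Dk] := exists_div_nat_lt D e20; have [N CN] := exists_div_nat_lt (C k) e20.
exists N => // n /= Nn; rewrite sub0r normrN.
apply: le_lt_trans (u_le k n) _.
by rewrite [e]splitr ltrD ?Dk ?CN // (leq_ltn_trans Nn).
Qed.

Section Curvature.
Variables (R : realType) (G : groupType) (S : seq G).
Hypothesis gen : forall g : G, exists w : seq G, all (mem S) w /\ wprod w = g.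
Hypothesis Sinv : forall a, a \in S -> (a^-1)%g \in S.
Hypothesis infG : infinite_group G.

Lemma dist_Av_wlen g : `|Av R S g - (wlen S g)%:R| <= 2.
Proof.
apply: mean_dist_le (size_gen_gt0 gen infG) _ => a Sa.
have := wlen_conj_le gen Sinv g Sa; have := wlen_le_conj gen Sinv g Sa.
rewrite -!(ler_nat R) !natrD => ? ?; rewrite ler_distl; apply/andP; split; lra.
Qed.

Lemma norm_curv_le g : `|curv R S g| <= 2 / (wlen S g)%:R.
Proof.
rewrite /curv normrM normfV normr_nat distrC.
by rewrite ler_wpM2r ?invr_ge0 ?dist_Av_wlen.
Qed.

Lemma norm_avg_curv_le n k :
  `|avg_curv R S n|
  <= 2 * (size (Defs.ball S k))%:R / (size (Defs.ball S n))%:R + 2 / (k.+1)%:R.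
Proof.
set Bk := (size (Defs.ball S k))%:R; set Bn := (size (Defs.ball S n))%:R.
have Bn0 : 0 < Bn by rewrite ltr0n (leq_ltn_trans _ (size_ball_gt gen infG n)).
have sum_le : `|\sum_(g <- Defs.ball S n | g != @monoid.one G) curv R S g|
              <= 2 * Bk + 2 * Bn / (k.+1)%:R.
  have term_le g : `|if g != @monoid.one G then curv R S g else 0|
                   <= 2 * ((wlen S g <= k)%N%:R + (k.+1)%:R^-1).
    case: ifP => _; last by rewrite normr0 mulr_ge0 ?addr_ge0.
    by apply: le_trans (norm_curv_le g) _; rewrite ler_wpM2l ?invr_nat_le_split.
  rewrite big_mkcond /=; apply: le_trans (ler_norm_sum _ _ _) _.
  apply: le_trans (ler_sum _ (fun g _ => term_le g)) _.
  rewrite -mulr_sumr big_split /= -mulrA -mulrDr ler_wpM2l //.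
  have -> : \sum_(g <- Defs.ball S n) (wlen S g <= k)%N%:R
            = (count (fun g => wlen S g <= k)%N (Defs.ball S n))%:R :> R.
    rewrite -sum1_count natr_sum [RHS]big_mkcond.
    by apply: eq_bigr => g _; case: (_ <= _)%N.
  rewrite big_const_seq count_predT iter_addr_0 -[_ *+ size _]mulr_natl lerD2r ler_nat.
  rewrite -size_filter uniq_leq_size ?filter_uniq ?undup_uniq // => g.
  by rewrite mem_filter !mem_ball; case: (wlen S g <= k)%N.
have -> : 2 * Bk / Bn + 2 / k.+1%:R = Bn^-1 * (2 * Bk + 2 * Bn / k.+1%:R).
  by field; rewrite -/Bn (lt0r_neq0 Bn0) andbT addrC natr1 pnatr_eq0.
by rewrite /avg_curv normrM normfV normr_nat ler_wpM2l // invr_ge0 ltW.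
Qed.

End Curvature.

Theorem mainTheorem16 (R : realType) (G : groupType) (S : seq G) :
  infinite_group G -> sym_gen_set S ->
  (fun n : nat => avg_curv R S n) @ \oo --> (0 : R).
Proof.
move=> infG [_ Sinv _ gen].
apply: (@cvg0_split_bound _ _ (fun n => size (Defs.ball S n))
          (fun k => 2 * (size (Defs.ball S k))%:R) 2).
  exact: size_ball_gt.
by move=> k n; exact: norm_avg_curv_le.
Qed.
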